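(* Let $p$ be a prime number and let $H=p\mathbb Z_{p^2}\times p\mathbb Z_{p^2}=\{(pj,pk):j,k\in\mathbb Z\}\subseteq\mathbb Z_{p^2}\times\mathbb Z_{p^2}$ (the unique non-cyclic Lagrangian of $\mathbb Z_{p^2}\times\mathbb Z_{p^2}$). If $A\subseteq\mathbb Z_{p^2}\times\mathbb Z_{p^2}$ complements $H$, i.e. $\{A+h\}_{h\in H}$ is a partition of $\mathbb Z_{p^2}\times\mathbb Z_{p^2}$, then $$\Delta A\cap Z(\widehat{\mathbf 1}_A^{sym})=\emptyset.$$
   Context: Here $n=p^2$. For $x=(x_1,x_2),y=(y_1,y_2)\in\mathbb Z_n\times\mathbb Z_n$ the symplectic form is $\langle x,y\rangle_s=x_1y_2-x_2y_1$. For $A\subseteq\mathbb Z_n\times\mathbb Z_n$, $\widehat{\mathbf 1}_A^{sym}(\xi)=\sum_{a\in A}e^{\frac{2\pi i}{n}\langle a,\xi\rangle_s}$ and $Z(\widehat{\mathbf 1}_A^{sym})=\{\xi:\widehat{\mathbf 1}_A^{sym}(\xi)=0\}$. The difference set is $\Delta A=\{a-a':a,a'\in A,\ a\neq a'\}$. A Lagrangian is a subset $H$ with $H=H^{\perp_s}$, where $H^{\perp_s}=\{g:\langle g,h\rangle_s=0\ \forall h\in H\}$; Lagrangians are exactly the subgroups of order $n$, and the only non-cyclic one in $\mathbb Z_{p^2}\times\mathbb Z_{p^2}$ is $p\mathbb Z_{p^2}\times p\mathbb Z_{p^2}$. *)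

From HB Require Import structures.
From mathcomp Require Import all_boot all_order all_algebra.
From mathcomp Require Import all_classical all_reals all_analysis.
From mathcomp Require Import complex.
Set Implicit Arguments. Unset Strict Implicit. Unset Printing Implicit Defensive.
Import Order.TTheory GRing.Theory Num.Theory.
Local Open Scope ring_scope.

(* The group Z_{p^2} x Z_{p^2}.  For p prime, p^2 >= 4, so 'Z_(p^2) is
   exactly Z/p^2Z. *)
Notation ZZ p := ('Z_(p ^ 2) * 'Z_(p ^ 2))%type.

Definition symp (p : nat) (x y : ZZ p) : 'Z_(p ^ 2) := x.1 * y.2 - x.2 * y.1.

Definition expi (R : realType) (n k : nat) : R[i] :=
  Complex (cos (2 * pi * k%:R / n%:R)) (sin (2 * pi * k%:R / n%:R)).

Definition fourier_sym (R : realType) (p : nat) (A : {set ZZ p}) (xi : ZZ p)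
  : R[i] := \sum_(a in A) expi R (p ^ 2) (nat_of_ord (symp a xi)).

Definition zero_set (p : nat) (T : nmodType) (f : ZZ p -> T) : {set ZZ p} :=
  [set xi | f xi == 0].

Definition diff_set (p : nat) (A : {set ZZ p}) : {set ZZ p} :=
  [set (a : ZZ p) - a' | a : ZZ p in A, a' : ZZ p in A & a != a'].

Definition Hnc (p : nat) : {set ZZ p} :=
  [set x : ZZ p | (p %| nat_of_ord x.1)%N && (p %| nat_of_ord x.2)%N].

Definition translate (p : nat) (A : {set ZZ p}) (h : ZZ p) : {set ZZ p} :=
  [set (a : ZZ p) + h | a : ZZ p in A].

Definition complements (p : nat) (A H : {set ZZ p}) : Prop :=
  (forall g : ZZ p, exists2 h, h \in H & g \in translate A h) /\
  (forall h h' : ZZ p, h \in H -> h' \in H -> h != h' ->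
      [disjoint translate A h & translate A h']).

From HB Require Import structures.
From mathcomp Require Import all_boot all_order all_algebra all_field.
From mathcomp Require Import all_classical all_reals all_analysis.
From mathcomp Require Import complex ring lra zify.
Import Order.TTheory GRing.Theory Num.Theory.
Set Implicit Arguments.
Unset Strict Implicit.
Unset Printing Implicit Defensive.
Local Open Scope ring_scope.

(* Suppose xi = a - a' (a <> a' in A) were a zero of F = \hat 1_A^sym, and let
   w = e^(2 pi i / p^2).  Then F(k xi) = 0 for every 0 < k < p^2.  If p does not
   divide k, F(k xi) is the image of F(xi) under the automorphism w |-> w^k of
   Q(w), because the cyclotomic polynomial Phi_(p^2) is irreducible.  If p divides
   k, then k xi is a nonzero element of H (xi is not in H because A tiles by H),
   and H is isotropic, so the character g |-> w^<g, k xi> is constant on the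
   cosets A + h and |H| F(k xi) = sum_g w^<g, k xi> = 0.  Vanishing of all these
   power sums means that the values <a, xi>, a in A, are equidistributed mod p^2,
   each taken |A| / p^2 times; but |A| <= p^2 since reduction mod p is injective
   on A, while <a, xi> = <a', xi>. *)

Lemma sum_expr_unity_root (R : idomainType) (u : R) n :
  u ^+ n = 1 -> \sum_(k < n) u ^+ k = if u == 1 then n%:R else 0.
Proof.
move=> un1; have [->|u_neq1] := eqVneq u 1.
  by rewrite (eq_bigr (fun=> 1)) ?sumr_const ?card_ord // => k _; rewrite expr1n.
apply/eqP; move: (subrX1 u n); rewrite un1 subrr => /esym/eqP.
by rewrite mulf_eq0 subr_eq0 (negbTE u_neq1).
Qed.

Lemma sum_eq0_of_scaled_reindex (T : finType) (R : idomainType) (f : T -> R)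
    (s : T -> T) c :
  injective s -> (forall x, f (s x) = c * f x) -> c != 1 -> \sum_x f x = 0.
Proof.
move=> s_inj fs c_neq1; set S := \sum_x f x.
have : c * S = S.
  by rewrite mulr_sumr [RHS](reindex_inj s_inj); apply: eq_bigr => x _; rewrite fs.
move/eqP; rewrite -subr_eq0 -{2}[S]mul1r -mulrBl mulf_eq0 subr_eq0.
by rewrite (negbTE c_neq1) => /eqP.
Qed.

Lemma card_eq_of_power_sums (F : fieldType) (T : finType) (A : {set T})
    (z : T -> F) (zeta : F) n :
  (0 < n)%N -> zeta ^+ n = 1 -> {in A, forall a, z a ^+ n = 1} ->
  (forall k, (0 < k < n)%N -> \sum_(a in A) z a ^+ k = 0) ->
  (#|[set a in A | z a == zeta]| * n)%:R = #|A|%:R :> F.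
Proof.
move=> n_gt0 zetan1 zn1 sum_z0.
have zeta_neq0 : zeta != 0.
  by apply: contra_eq_neq zetan1 => ->; rewrite expr0n eqn0Ngt n_gt0 /= eq_sym oner_neq0.
pose S := \sum_(k < n) \sum_(a in A) (z a / zeta) ^+ k.
have -> : #|A|%:R = S.
  rewrite /S (bigD1 (Ordinal n_gt0)) //= [X in _ + X]big1 ?addr0.
    by under eq_bigr do rewrite expr0; rewrite sumr_const.
  move=> k k_neq0; under eq_bigr do rewrite exprMn.
  rewrite -mulr_suml sum_z0 ?mul0r // ltn_ord andbT lt0n.
  by move: k_neq0; rewrite -val_eqE.
have -> : S = \sum_(a in A | z a == zeta) n%:R.
  rewrite /S exchange_big big_mkcondr /=; apply: eq_bigr => a aA.
  rewrite sum_expr_unity_root; last by rewrite expr_div_n zn1 // zetan1 divr1.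
  have [->|z_neq] := eqVneq (z a) zeta; first by rewrite divff ?eqxx.
  by case: eqP => // /divr1_eq /eqP; rewrite (negbTE z_neq).
rewrite sumr_const -mulrnA mulnC; congr (_ * _)%:R.
by apply: eq_card => a; rewrite !inE.
Qed.

Section CyclotomicRoots.

Variable F : numFieldType.

Lemma root_Cyclotomic n (z : F) :
  n.-primitive_root z -> root (map_poly intr 'Phi_n) z.
Proof.
move=> prim_z; have n_gt0 := prim_order_gt0 prim_z.
have unity_root_Phi m : (0 < m)%N -> (z ^+ m == 1) =
    ~~ all (fun q => ~~ root q z) [seq map_poly (intr : int -> F) 'Phi_d | d <- divisors m].
  move=> m_gt0; rewrite -root_bigmul negbK big_map -rmorph_prod prod_Cyclotomic //.
  by rewrite rmorphB rmorph1 /= map_polyXn rootE !hornerE subr_eq0.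
have /allPn[_ /mapP[d d_dvd ->] /negPn root_d] : ~~ all (fun q => ~~ root q z)
    [seq map_poly (intr : int -> F) 'Phi_d | d <- divisors n].
  by rewrite -unity_root_Phi ?prim_expr_order.
rewrite -dvdn_divisors // in d_dvd.
have d_gt0 : (0 < d)%N := dvdn_gt0 n_gt0 d_dvd.
suff n_dvd_d : (n %| d)%N by rewrite -(eqP (_ : d == n)) // eqn_dvd d_dvd n_dvd_d.
rewrite (prim_order_dvd prim_z) unity_root_Phi //; apply/allPn.
by exists (map_poly intr 'Phi_d); [apply: map_f; rewrite -dvdn_divisors | rewrite root_d].
Qed.

Lemma ratr_int_Cyclotomic (K : numFieldType) n :
  map_poly (ratr : rat -> K) (map_poly intr 'Phi_n) = map_poly intr 'Phi_n.
Proof. by rewrite -map_poly_comp; apply: eq_map_poly => b /=; rewrite rmorph_int. Qed.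

(* The minimal polynomial over Q of a root z in algC of gcd(q, Phi_n) is
   cyclotomic, hence Phi_n itself. *)
Lemma Cyclotomic_dvdp_of_root n (w : F) (q : {poly rat}) :
  n.-primitive_root w -> root (map_poly ratr q) w -> map_poly intr 'Phi_n %| q.
Proof.
move=> prim_w root_q; pose g := gcdp q (map_poly intr 'Phi_n).
have root_g : root (map_poly (ratr : rat -> F) g) w.
  by rewrite gcdp_map root_gcd root_q ratr_int_Cyclotomic root_Cyclotomic.
have size_g : size (map_poly (ratr : rat -> algC) g) != 1%N.
  rewrite size_map_poly; apply/negP => /size_poly1P[c c_neq0 gE].
  by move: root_g; rewrite gE map_polyC rootC fmorph_eq0 (negbTE c_neq0).
have [z root_z] := closed_rootP _ size_g.
have [z0 prim_z0] := C_prim_root_exists (prim_order_gt0 prim_w).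
have prim_z : n.-primitive_root z.
  rewrite -(root_cyclotomic prim_z0) -(Cintr_Cyclotomic prim_z0) -ratr_int_Cyclotomic.
  have /dvdpP[s ->] : g %| map_poly intr 'Phi_n by apply: dvdp_gcdr.
  by rewrite rmorphM rootM root_z orbT.
have [pz [pzE _] pz_dvd] := minCpolyP z.
have -> : map_poly intr 'Phi_n = pz.
  apply: (map_inj_poly (fmorph_inj (ratr : {rmorphism rat -> algC})) (rmorph0 _)).
  by rewrite -pzE (minCpoly_cyclotomic prim_z) -(Cintr_Cyclotomic prim_z) ratr_int_Cyclotomic.
by apply: dvdp_trans (dvdp_gcdl q (map_poly intr 'Phi_n)); rewrite -pz_dvd.
Qed.

Lemma root_prim_expr_coprime n (w : F) (q : {poly rat}) k :
  n.-primitive_root w -> root (map_poly ratr q) w -> coprime k n ->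
  root (map_poly ratr q) (w ^+ k).
Proof.
move=> prim_w root_q k_co_n.
have /dvdpP[s ->] := Cyclotomic_dvdp_of_root prim_w root_q.
rewrite rmorphM rootM /= ratr_int_Cyclotomic.
by rewrite root_Cyclotomic ?orbT // prim_root_exp_coprime.
Qed.

End CyclotomicRoots.

Section ComplexExponential.

Variable R : realType.

Lemma cos_mulr2n_lt1 (y : R) : 0 < y < pi -> cos (y *+ 2) < 1.
Proof.
move=> /sin_gt0_pi sin_gt0; rewrite cos_mulr2n cos2sin2 mulr2n.
have : 0 < sin y ^+ 2 by rewrite exprn_gt0.
lra.
Qed.

Lemma expiD n j k : expi R n (j + k) = expi R n j * expi R n k.
Proof.
rewrite /expi natrD mulrDr mulrDl cosD sinD.
by apply/eqP; rewrite eq_complex /= !eqxx addrC eqxx.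
Qed.

Lemma expiX n k : expi R n k = expi R n 1 ^+ k.
Proof.
elim: k => [|k IHk]; last by rewrite exprSr -IHk -expiD addn1.
by apply/eqP; rewrite eq_complex /= !mulr0 !mul0r cos0 sin0 !eqxx.
Qed.

Lemma expi_neq1 n k : (0 < k < n)%N -> expi R n k != 1.
Proof.
move=> /andP[k_gt0 k_lt_n]; rewrite eq_complex negb_and /= lt_eqF //.
have -> : 2 * pi * k%:R / n%:R = (pi * k%:R / n%:R) *+ 2 :> R.
  by rewrite mulr_natl !mulrnAl.
have n_gt0 : (0 < n)%N := ltn_trans k_gt0 k_lt_n.
apply: cos_mulr2n_lt1; rewrite divr_gt0 ?mulr_gt0 ?pi_gt0 ?ltr0n //=.
by rewrite ltr_pdivrMr ?ltr0n // ltr_pM2l ?pi_gt0 ?ltr_nat.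
Qed.

Lemma expi_prim_root n : (0 < n)%N -> n.-primitive_root (expi R n 1).
Proof.
move=> n_gt0; apply/andP; split => //; apply/forallP => i.
rewrite unity_rootE -expiX; have [->|i_neq] := eqVneq i.+1 n.
  by rewrite /expi mulfK ?pnatr_eq0 -?lt0n // mulr_natl cos2pi sin2pi eqb_id; apply/eqP.
have i_lt : (0 < i.+1 < n)%N by rewrite /= ltn_neqAle i_neq ltn_ord.
by rewrite (negbTE (expi_neq1 i_lt)).
Qed.

End ComplexExponential.

Lemma dvdn_mod d m n : (d %| m)%N -> (d %| n %% m)%N = (d %| n)%N.
Proof. by move=> d_dvd_m; rewrite /dvdn modn_dvdm. Qed.

Section ZpValues.

Variable m : nat.
Hypothesis m_gt1 : (1 < m)%N.

Lemma ltn_Zp (x : 'Z_m) : (x < m)%N.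
Proof. by case: x => i i_lt /=; rewrite -[X in (_ < X)%N](Zp_cast m_gt1). Qed.

Lemma val_Zp_add (x y : 'Z_m) : (x + y)%R = ((x + y) %% m)%N :> nat.
Proof. by rewrite -val_Zp_nat // natrD !natr_Zp. Qed.

Lemma val_Zp_mul (x y : 'Z_m) : (x * y)%R = ((x * y) %% m)%N :> nat.
Proof. by rewrite -val_Zp_nat // natrM !natr_Zp. Qed.

Lemma val_Zp_mulrn (x : 'Z_m) k : x *+ k = ((x * k) %% m)%N :> nat.
Proof. by rewrite -val_Zp_nat // mulrnA natr_Zp. Qed.

Lemma dvdn_val_Zp_sub d (x y : 'Z_m) :
  (d %| m)%N -> (d %| (x - y)%R)%N = (x == y %[mod d]).
Proof.
move=> d_dvd_m; have -> : x = (((x - y)%R + y) %% m)%N :> nat by rewrite -val_Zp_add subrK.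
by rewrite modn_dvdm // -[in RHS](add0n (val y)) eqn_modDr mod0n.
Qed.

End ZpValues.

Section ZpCharacter.

Variables (R : idomainType) (m : nat) (w : R).
Hypotheses (m_gt1 : (1 < m)%N) (prim_w : m.-primitive_root w).

Lemma expr_ZpD (x y : 'Z_m) : w ^+ (x + y)%R = w ^+ x * w ^+ y.
Proof. by rewrite val_Zp_add // expr_mod ?(prim_expr_order prim_w) // exprD. Qed.

Lemma expr_Zp_mulrn (x : 'Z_m) k : w ^+ (x *+ k)%R = w ^+ x ^+ k.
Proof. by rewrite val_Zp_mulrn // expr_mod ?(prim_expr_order prim_w) // exprM. Qed.

Lemma expr_Zp_eq1 (x : 'Z_m) : (w ^+ x == 1) = (x == 0).
Proof. by rewrite -(prim_order_dvd prim_w) /dvdn modn_small ?ltn_Zp. Qed.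

End ZpCharacter.

Section Complements.

Variables (p : nat) (A H : {set ZZ p}).
Hypothesis A_compl : complements A H.

Lemma complements_sub_eq a a' :
  0 \in H -> a \in A -> a' \in A -> a - a' \in H -> a = a'.
Proof.
move=> H0 aA a'A aa'H; apply/eqP; rewrite -subr_eq0; apply/negPn/negP => neq0.
have neq : 0 != a - a' by rewrite eq_sym.
have a_in0 : a \in translate A 0 by apply/imsetP; exists a; rewrite ?addr0.
have a_in : a \in translate A (a - a') by apply/imsetP; exists a'; rewrite // addrC subrK.
by rewrite (disjointFr (A_compl.2 _ _ H0 aa'H neq) a_in0) in a_in.
Qed.

Lemma complements_sum (V : nmodType) (f : ZZ p -> V) :
  \sum_g f g = \sum_(a in A) \sum_(h in H) f (a + h).
Proof.
have [cover disj] := A_compl.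
pose add (x : ZZ p * ZZ p) := x.1 + x.2.
have add_inj : {in finset.setX A H &, injective add}.
  move=> [a h] [a' h'] /setXP[aA hH] /setXP[a'A h'H]; rewrite /add /= => eq_sum.
  have [eq_h|neq_h] := eqVneq h h'.
    by rewrite -eq_h in eq_sum *; rewrite (addIr _ eq_sum).
  have sum_in : a + h \in translate A h by apply/imsetP; exists a.
  have sum_in' : a + h \in translate A h' by rewrite eq_sum; apply/imsetP; exists a'.
  by rewrite (disjointFr (disj _ _ hH h'H neq_h) sum_in) in sum_in'.
have add_onto : add @: finset.setX A H = [set: ZZ p].
  apply/setP => g; rewrite inE; have [h hH /imsetP[a aA ->]] := cover g.
  by apply/imsetP; exists (a, h); rewrite ?inE ?aA.
transitivity (\sum_(g in [set: ZZ p]) f g); first by apply: eq_bigl => g; rewrite inE.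
rewrite -add_onto big_imset //= pair_big /=.
by apply: eq_bigl => -[a h]; rewrite inE.
Qed.

End Complements.

Lemma pair_mulrn (U V : nmodType) (x : U * V) k : x *+ k = (x.1 *+ k, x.2 *+ k).
Proof. by elim: k => [|k IHk]; rewrite ?mulr0n // !mulrS IHk; case: x {IHk}. Qed.

Lemma Hnc0 p : 0 \in Hnc p.
Proof. by rewrite inE /= dvdn0. Qed.

Lemma sympDl p (a b xi : ZZ p) : symp (a + b) xi = symp a xi + symp b xi.
Proof. by rewrite /symp /=; ring. Qed.

Lemma symp_mulrnr p (a xi : ZZ p) k : symp a (xi *+ k) = symp a xi *+ k.
Proof. by rewrite /symp pair_mulrn /= mulrnBl !mulrnAr. Qed.

Lemma symp_sub p (a b : ZZ p) : symp a (a - b) = symp b (a - b).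
Proof. by rewrite /symp /=; ring. Qed.

Lemma symp_nondegenerate p (eta : ZZ p) : eta != 0 -> exists g, symp g eta != 0.
Proof.
move=> eta_neq0; have : (eta.1 != 0) || (eta.2 != 0).
  apply: contraNT eta_neq0 => /norP[/negPn/eqP eta1 /negPn/eqP eta2].
  by apply/eqP; rewrite [eta]surjective_pairing eta1 eta2.
case/orP => eta_i_neq0; [exists (0, -1) | exists (1, 0)];
  by rewrite /symp /= ?mul0r ?sub0r ?mulN1r ?opprK ?mul1r ?subr0.
Qed.

Section SymplecticFourier.

Variables (R : realType) (p : nat).
Hypothesis p_prime : prime p.

Let p_gt0 : (0 < p)%N := prime_gt0 p_prime.
Let pp_gt1 : (1 < p ^ 2)%N.
Proof. by rewrite (ltn_exp2l 0) // prime_gt1. Qed.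
Let p_dvd_pp : (p %| p ^ 2)%N.
Proof. by rewrite dvdn_exp. Qed.
Let prim_w : (p ^ 2).-primitive_root (expi R (p ^ 2) 1).
Proof. by apply: expi_prim_root; rewrite ltnW. Qed.

Lemma fourier_symE (A : {set ZZ p}) xi :
  fourier_sym R A xi = \sum_(a in A) expi R (p ^ 2) 1 ^+ symp a xi.
Proof. by apply: eq_bigr => a _; rewrite expiX. Qed.

Lemma Zp_mul_dvdn_eq0 (x y : 'Z_(p ^ 2)) : (p %| x)%N -> (p %| y)%N -> x * y = 0.
Proof.
move=> p_dvd_x p_dvd_y; apply: ord_inj; rewrite val_Zp_mul //; apply/eqP.
change (p ^ 2 %| x * y)%N; apply: dvdn_trans (dvdn_mul p_dvd_x p_dvd_y).
by rewrite mulnn.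
Qed.

Lemma Zp_mulrn_neq0 (x : 'Z_(p ^ 2)) k :
  ~~ (p %| x)%N -> (0 < k < p ^ 2)%N -> x *+ k != 0.
Proof.
move=> p_ndvd_x /andP[k_gt0 k_lt]; apply: contraTneq k_lt.
move=> /(congr1 (@nat_of_ord _)); rewrite val_Zp_mulrn // => /eqP.
change ((p ^ 2 %| x * k)%N -> ~~ (k < p ^ 2)%N).
by rewrite Gauss_dvdr ?coprime_pexpl ?prime_coprime // -leqNgt; apply: dvdn_leq.
Qed.

Lemma symp_Hnc_eq0 (h eta : ZZ p) : h \in Hnc p -> eta \in Hnc p -> symp h eta = 0.
Proof.
by rewrite !inE => /andP[h1 h2] /andP[e1 e2]; rewrite /symp !Zp_mul_dvdn_eq0 ?subrr.
Qed.

Lemma mulrn_in_Hnc (xi : ZZ p) k : (p %| k)%N -> xi *+ k \in Hnc p.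
Proof.
by move=> p_dvd_k; rewrite inE pair_mulrn /= !val_Zp_mulrn // !dvdn_mod // !dvdn_mull.
Qed.

Lemma mulrn_notin_Hnc_neq0 (xi : ZZ p) k :
  xi \notin Hnc p -> (0 < k < p ^ 2)%N -> xi *+ k != 0.
Proof.
rewrite inE negb_and pair_mulrn => /orP[x_ndvd|x_ndvd] k_range.
  by apply: contra_neq (Zp_mulrn_neq0 x_ndvd k_range) => /(congr1 fst).
by apply: contra_neq (Zp_mulrn_neq0 x_ndvd k_range) => /(congr1 snd).
Qed.

Lemma card_complement_Hnc_le (A : {set ZZ p}) : complements A (Hnc p) -> (#|A| <= p ^ 2)%N.
Proof.
move=> A_compl.
pose red (a : ZZ p) : 'I_p * 'I_p :=
  (Ordinal (ltn_pmod a.1 p_gt0), Ordinal (ltn_pmod a.2 p_gt0)).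
have red_inj : {in A &, injective red}.
  move=> a a' aA a'A /eqP; rewrite xpair_eqE -!val_eqE /= => /andP[eq1 eq2].
  apply: (complements_sub_eq A_compl (Hnc0 p) aA a'A).
  by rewrite inE /= !dvdn_val_Zp_sub // eq1 eq2.
rewrite -(card_in_imset red_inj); apply: leq_trans (max_card _) _.
by rewrite card_prod !card_ord mulnn.
Qed.

Lemma fourier_sym_Hnc_eq0 (A : {set ZZ p}) eta :
  complements A (Hnc p) -> eta \in Hnc p -> eta != 0 -> fourier_sym R A eta = 0.
Proof.
move=> A_compl eta_H eta_neq0.
pose chi (g : ZZ p) := expi R (p ^ 2) 1 ^+ symp g eta.
have chiD : {morph chi : x y / x + y >-> x * y}.
  by move=> x y; rewrite /chi sympDl expr_ZpD.
have chi_H h : h \in Hnc p -> chi h = 1 by move=> hH; rewrite /chi symp_Hnc_eq0.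
have [g symp_g_neq0] := symp_nondegenerate eta_neq0.
have chi_g : chi g != 1 by rewrite /chi expr_Zp_eq1.
have := complements_sum A_compl chi.
rewrite (sum_eq0_of_scaled_reindex (addIr g) _ chi_g); last by move=> x; rewrite chiD mulrC.
under eq_bigr => a _ do under eq_bigr => h hH do rewrite chiD (chi_H h hH) mulr1.
rewrite fourier_symE; under eq_bigr do rewrite sumr_const.
rewrite sumrMnl => /esym/eqP; rewrite mulrn_eq0 => /orP[|/eqP sum0]; last exact: sum0.
by move=> /eqP/card0_eq/(_ 0); rewrite Hnc0 inE.
Qed.

Lemma fourier_sym_mulrn_coprime (A : {set ZZ p}) xi k :
  fourier_sym R A xi = 0 -> coprime k (p ^ 2) -> fourier_sym R A (xi *+ k) = 0.
Proof.
move=> F0 k_co.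
pose q : {poly rat} := \sum_(a in A) 'X^(symp a xi).
have ratr_q : map_poly (ratr : rat -> R[i]) q = \sum_(a in A) 'X^(symp a xi).
  by rewrite raddf_sum; apply: eq_bigr => a _; exact: map_polyXn.
have root_q : root (map_poly ratr q) (expi R (p ^ 2) 1).
  rewrite ratr_q rootE horner_sum; apply/eqP; rewrite -[RHS]F0 fourier_symE.
  by apply: eq_bigr => a _; rewrite hornerXn.
have := root_prim_expr_coprime prim_w root_q k_co.
rewrite ratr_q rootE horner_sum fourier_symE => /eqP sum0.
rewrite -[RHS]sum0; apply: eq_bigr => a _.
by rewrite hornerXn symp_mulrnr expr_Zp_mulrn // exprAC.
Qed.

Lemma fourier_sym_mulrn_eq0 (A : {set ZZ p}) xi k :
  complements A (Hnc p) -> xi \notin Hnc p -> fourier_sym R A xi = 0 ->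
  (0 < k < p ^ 2)%N -> fourier_sym R A (xi *+ k) = 0.
Proof.
move=> A_compl xi_notin F0 k_range.
have [k_co|k_nco] := boolP (coprime k (p ^ 2)); first exact: fourier_sym_mulrn_coprime.
apply: fourier_sym_Hnc_eq0 => //; last exact: mulrn_notin_Hnc_neq0.
by apply: mulrn_in_Hnc; move: k_nco; rewrite coprime_sym coprime_pexpl // prime_coprime // negbK.
Qed.

Lemma card_symp_eq (A : {set ZZ p}) xi a0 :
  complements A (Hnc p) -> xi \notin Hnc p -> fourier_sym R A xi = 0 ->
  (#|[set a in A | symp a xi == symp a0 xi]| * p ^ 2)%N = #|A|.
Proof.
move=> A_compl xi_notin F0; set w := expi R (p ^ 2) 1.
have wN1 (x : 'Z_(p ^ 2)) : (w ^+ x) ^+ (p ^ 2) = 1.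
  by rewrite exprAC (prim_expr_order prim_w) expr1n.
have := card_eq_of_power_sums (A := A) (z := fun a => w ^+ symp a xi)
  (zeta := w ^+ symp a0 xi) (ltnW pp_gt1) (wN1 _) (fun a _ => wN1 _).
have -> : [set a in A | w ^+ symp a xi == w ^+ symp a0 xi] =
          [set a in A | symp a xi == symp a0 xi].
  by apply/setP => a; rewrite !inE (eq_prim_root_expr prim_w) !modn_small ?ltn_Zp.
move=> card_eq; apply/eqP; rewrite -(eqr_nat R[i]) card_eq // => k k_range.
rewrite -[RHS](fourier_sym_mulrn_eq0 A_compl xi_notin F0 k_range) fourier_symE.
by apply: eq_bigr => a _; rewrite symp_mulrnr expr_Zp_mulrn.
Qed.

End SymplecticFourier.

Theorem mainTheorem3 (R : realType) (p : nat) (A : {set ZZ p}) :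
  prime p -> complements A (Hnc p) ->
  diff_set A :&: zero_set (fourier_sym R A) = finset.set0.
Proof.
move=> p_prime A_compl; apply/setP => xi; rewrite !inE; apply/negP => /andP[].
case/imset2P => a0 a1 a0A; rewrite inE => /andP[a1A a0_neq_a1] xiE /eqP F0.
have xi_notin : xi \notin Hnc p.
  apply: contra a0_neq_a1; rewrite xiE.
  by move/(complements_sub_eq A_compl (Hnc0 p) a0A a1A) ->.
have := card_symp_eq p_prime a0 A_compl xi_notin F0.
have := card_complement_Hnc_le p_prime A_compl.
have : (1 < #|[set a in A | symp a xi == symp a0 xi]|)%N.
  apply/card_gt1P; exists a0, a1; rewrite !inE a0A a1A a0_neq_a1 eqxx.
  by rewrite xiE -symp_sub eqxx.
have := prime_gt0 p_prime; nia.
Qed.
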